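(* For every $q>1$, the sketch $q$-$\mathsf{LL}$ is weakly scale-invariant with base $q$, and $\mathcal{H}(q\text{-}\mathsf{LL})=\phi(q)/\ln q$ and $\mathcal{I}(q\text{-}\mathsf{LL})=\rho(q)/\ln q$.
   Context: A sketch is described by its induced distribution family: for each cardinality $\lambda>0$, a distribution $\psi_\lambda$ on a countable state space; $X_\lambda\sim\psi_\lambda$. Entropy $H(X_\lambda)=-\sum_x\psi_\lambda(x)\log_2\psi_\lambda(x)$, Fisher information $I(\lambda)=\sum_x(\frac{\partial}{\partial\lambda}\psi_\lambda(x))^2/\psi_\lambda(x)$. Weakly scale-invariant with base $q>1$ means: for all $\lambda>0$, $H(X_\lambda)=H(X_{q\lambda})$ and $I(\lambda)=q^2I(q\lambda)$. Then $\mathcal{H}=\int_0^1H(X_{q^r})\,dr$ and $\mathcal{I}=\int_0^1 q^{2r}I(q^r)\,dr$. The sketch $q$-$\mathsf{LL}$ has state space $\mathbb Z$ and $\psi_\lambda(k)=e^{-\lambda/q^k}-e^{-\lambda/q^{k-1}}$. $\phi(q)=\int_{-\infty}^\infty -\big(e^{-e^r}-e^{-qe^r}\big)\log_2\big(e^{-e^r}-e^{-qe^r}\big)\,dr$, $\rho(q)=\int_{-\infty}^\infty \frac{\left(-e^re^{-e^r}+qe^re^{-qe^r}\right)^2}{e^{-e^r}-e^{-qe^r}}\,dr$. *)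

From Stdlib Require Import Reals ZArith.
From Coquelicot Require Import Coquelicot.
Open Scope R_scope.

(* A distribution family on state space Z: psi lambda k *)
Definition family := R -> Z -> R.

Definition ex_seriesZ (f : Z -> R) : Prop :=
  ex_series (fun n : nat => f (Z.of_nat n)) /\
  ex_series (fun n : nat => f (- (Z.of_nat n + 1))%Z).

Definition SeriesZ (f : Z -> R) : R :=
  Series (fun n : nat => f (Z.of_nat n)) +
  Series (fun n : nat => f (- (Z.of_nat n + 1))%Z).

Definition log2 (x : R) : R := ln x / ln 2.

Definition entropy_term (psi : family) (l : R) (x : Z) : R :=
  - (psi l x * log2 (psi l x)).
Definition entropy (psi : family) (l : R) : R := SeriesZ (entropy_term psi l).

Definition fisher_term (psi : family) (l : R) (x : Z) : R :=
  (Derive (fun m => psi m x) l) ^ 2 / psi l x.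
Definition fisher (psi : family) (l : R) : R := SeriesZ (fisher_term psi l).

Definition weakly_scale_invariant (psi : family) (q : R) : Prop :=
  forall l, 0 < l ->
    entropy psi l = entropy psi (q * l) /\
    fisher psi l = q ^ 2 * fisher psi (q * l).

Definition calH (psi : family) (q : R) : R :=
  RInt (fun r => entropy psi (Rpower q r)) 0 1.
Definition calI (psi : family) (q : R) : R :=
  RInt (fun r => Rpower q (2 * r) * fisher psi (Rpower q r)) 0 1.

Definition qLL (q : R) : family :=
  fun l k => exp (- l / powerRZ q k) - exp (- l / powerRZ q (k - 1)).

Definition phi_integrand (q r : R) : R :=
  - ((exp (- exp r) - exp (- (q * exp r))) *
     log2 (exp (- exp r) - exp (- (q * exp r)))).
Definition rho_integrand (q r : R) : R :=
  (- (exp r * exp (- exp r)) + q * exp r * exp (- (q * exp r))) ^ 2 /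
  (exp (- exp r) - exp (- (q * exp r))).

Definition phi (q : R) : R :=
  RInt_gen (phi_integrand q) (Rbar_locally m_infty) (Rbar_locally p_infty).
Definition rho (q : R) : R :=
  RInt_gen (rho_integrand q) (Rbar_locally m_infty) (Rbar_locally p_infty).

From Stdlib Require Import Reals Lra Lia ZArith.
From Coquelicot Require Import Coquelicot.
Open Scope R_scope.

(* Writing psi_lambda(k) = g(ln lambda - k ln q) with g(t) = exp(-e^t) - exp(-q e^t),
   every entropy term is phi_integrand q evaluated at ln lambda - k ln q, and every
   Fisher term is lambda^-2 times rho_integrand q at the same point.  Both entropy and
   Fisher information are therefore sums over Z of the translates of a fixed function F
   by multiples of the period L = ln q: a "periodization" of F.

   The first part of the file is a general theory of periodizations of continuous
   nonnegative functions with F(t) <= C exp(-|t|/2): the two series converge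
   geometrically, the periodization is L-periodic, and its integral over one period
   equals the integral of F over R (the partial sums converge uniformly on a period,
   and their integrals are integrals of F over windows exhausting R).  Scaling
   lambda by q is a shift by one period, which gives weak scale invariance, and the
   change of variables lambda = q^r turns calH and calI into periodization integrals,
   which yields phi(q)/ln q and rho(q)/ln q. *)

Lemma exp_le_exp (x y : R) : x <= y -> exp x <= exp y.
Proof. intros [h|h]; [left; apply exp_increasing; auto | subst; lra]. Qed.

Lemma exp_INR_mult (n : nat) (y : R) : exp (INR n * y) = exp y ^ n.
Proof.
  induction n as [|n IH].
  - simpl; rewrite Rmult_0_l, exp_0; reflexivity.
  - rewrite S_INR, Rmult_plus_distr_r, Rmult_1_l, exp_plus, IH; simpl; ring.
Qed.

Lemma exp_opp_cancel (x y : R) : x + y = 0 -> exp x * exp y = 1.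
Proof. intros H; rewrite <- exp_plus, H; apply exp_0. Qed.

Lemma ln_gt_0 (x : R) : 1 < x -> 0 < ln x.
Proof. intros; rewrite <- ln_1; apply ln_increasing; lra. Qed.

Lemma ex_series_geom_dominated (a : nat -> R) (K r : R) : 0 < r < 1 ->
  (forall n, 0 <= a n <= K * r ^ n) -> ex_series a.
Proof.
  intros Hr Ha. apply (ex_series_le a (fun n => K * r ^ n)).
  - intros n. destruct (Ha n). change (norm (a n)) with (Rabs (a n)).
    rewrite Rabs_pos_eq; lra.
  - apply (ex_series_scal_l K (fun n => r ^ n)). apply ex_series_geom.
    rewrite Rabs_pos_eq; lra.
Qed.

Lemma Series_nonneg (a : nat -> R) : ex_series a -> (forall n, 0 <= a n) -> 0 <= Series a.
Proof.
  intros He Ha.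
  rewrite <- (Rmult_0_l (Series a)), <- Series_scal_l.
  apply Series_le; auto. intros n; rewrite Rmult_0_l; split; [lra | auto].
Qed.

Lemma series_tail_geom (a : nat -> R) (K r : R) (n : nat) : 0 < r < 1 ->
  (forall m, 0 <= a m <= K * r ^ m) ->
  0 <= Series a - sum_f_R0 a n <= K * r ^ (S n) / (1 - r).
Proof.
  intros Hr Ha.
  assert (Hshift : forall m, 0 <= a (S n + m)%nat <= K * r ^ (S n) * r ^ m).
  { intros m. rewrite Rmult_assoc, <- pow_add. apply Ha. }
  rewrite (Series_incr_n a (S n)) by (auto with arith || apply (ex_series_geom_dominated a K r); auto).
  simpl pred.
  assert (Htail_ex : ex_series (fun k => a (S n + k)%nat))
    by (apply (ex_series_geom_dominated _ (K * r ^ (S n)) r); auto).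
  assert (Htail_pos : 0 <= Series (fun k => a (S n + k)%nat))
    by (apply Series_nonneg; auto; intros; apply Hshift).
  assert (Htail_le : Series (fun k => a (S n + k)%nat) <= Series (fun k => K * r ^ (S n) * r ^ k)).
  { apply Series_le; [exact Hshift|].
    apply (ex_series_scal_l (K * r ^ (S n)) (fun k => r ^ k)). apply ex_series_geom.
    rewrite Rabs_pos_eq; lra. }
  rewrite Series_scal_l, Series_geom in Htail_le by (rewrite Rabs_pos_eq; lra).
  unfold Rdiv. lra.
Qed.

Lemma is_RInt_congr (f g : R -> R) (a b l l' : R) :
  is_RInt f a b l -> (forall x, f x = g x) -> l = l' -> is_RInt g a b l'.
Proof. intros H Hfg <-. eapply is_RInt_ext; [|exact H]. intros; apply Hfg. Qed.

(* The clamp of a real number to [0,1]: it turns a statement on [0,1] into one on R. *)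
Definition clamp01 (r : R) : R := Rmin 1 (Rmax 0 r).
Lemma clamp01_range (r : R) : 0 <= clamp01 r <= 1.
Proof. unfold clamp01, Rmin, Rmax; repeat destruct Rle_dec; lra. Qed.
Lemma clamp01_id (r : R) : 0 <= r <= 1 -> clamp01 r = r.
Proof. unfold clamp01, Rmin, Rmax; repeat destruct Rle_dec; lra. Qed.

Definition exp_dominated (F : R -> R) (C : R) : Prop :=
  (forall t, continuous F t) /\ (forall t, 0 <= F t <= C * exp (- Rabs t / 2)).

Definition periodization (F : R -> R) (L x : R) : R :=
  Series (fun n => F (x - INR n * L)) + Series (fun n => F (x + (INR n + 1) * L)).

Section Periodization.

Variables (F : R -> R) (C L : R).
Hypothesis HL : 0 < L.
Hypothesis HF : exp_dominated F C.

Lemma decay_range : 0 < exp (- L / 2) < 1.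
Proof.
  split; [apply exp_pos|]. rewrite <- exp_0; apply exp_increasing; lra.
Qed.

Lemma dominated_const_nonneg : 0 <= C.
Proof.
  destruct HF as [_ H]. destruct (H 0) as [H1 H2].
  pose proof (exp_pos (- Rabs 0 / 2)). nra.
Qed.

Lemma dominated_far_bound (x t : R) (n : nat) : INR n * L - Rabs x <= Rabs t ->
  F t <= C * exp (Rabs x / 2) * exp (- L / 2) ^ n.
Proof.
  intros Ht. pose proof dominated_const_nonneg as HC.
  destruct HF as [_ HFb]. destruct (HFb t) as [_ H].
  eapply Rle_trans; [apply H|].
  rewrite Rmult_assoc. apply Rmult_le_compat_l; auto.
  rewrite <- exp_INR_mult, <- exp_plus. apply exp_le_exp.
  assert (INR n * (- L / 2) = - (INR n * L) / 2) by field. lra.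
Qed.

Lemma left_translate_bound (x : R) (n : nat) :
  0 <= F (x - INR n * L) <= C * exp (Rabs x / 2) * exp (- L / 2) ^ n.
Proof.
  split; [apply HF|]. apply dominated_far_bound.
  pose proof (pos_INR n). assert (0 <= INR n * L) by nra.
  set (m := INR n * L) in *. unfold Rabs; destruct Rcase_abs; destruct Rcase_abs; lra.
Qed.

Lemma right_translate_bound (x : R) (n : nat) :
  0 <= F (x + (INR n + 1) * L) <= C * exp (Rabs x / 2) * exp (- L / 2) ^ n.
Proof.
  split; [apply HF|]. apply dominated_far_bound.
  pose proof (pos_INR n). assert (0 <= INR n * L) by nra.
  replace ((INR n + 1) * L) with (INR n * L + L) by ring.
  set (m := INR n * L) in *. unfold Rabs; destruct Rcase_abs; destruct Rcase_abs; lra.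
Qed.

Lemma ex_series_left (x : R) : ex_series (fun n => F (x - INR n * L)).
Proof.
  eapply (ex_series_geom_dominated _ _ _ decay_range); apply left_translate_bound.
Qed.

Lemma ex_series_right (x : R) : ex_series (fun n => F (x + (INR n + 1) * L)).
Proof.
  eapply (ex_series_geom_dominated _ _ _ decay_range); apply right_translate_bound.
Qed.

(* Shifting by one period moves the term at x from the right series to the left one. *)
Lemma periodization_shift (x : R) : periodization F L (x + L) = periodization F L x.
Proof.
  unfold periodization.
  rewrite (Series_incr_1 (fun n => F (x + L - INR n * L))) by apply ex_series_left.
  rewrite (Series_incr_1 (fun n => F (x + (INR n + 1) * L))) by apply ex_series_right.
  rewrite (Series_ext (fun k => F (x + L - INR (S k) * L)) (fun n => F (x - INR n * L)))
    by (intros n; rewrite S_INR; f_equal; ring).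
  rewrite (Series_ext (fun k => F (x + (INR (S k) + 1) * L))
                      (fun n => F (x + L + (INR n + 1) * L)))
    by (intros n; rewrite S_INR; f_equal; ring).
  simpl INR. replace (x + L - 0 * L) with (x + (0 + 1) * L) by ring. ring.
Qed.

Lemma dominated_ex_RInt (a b : R) : ex_RInt F a b.
Proof. apply (@ex_RInt_continuous R_CompleteNormedModule); intros; apply HF. Qed.

Lemma RInt_split (a b c : R) : RInt F a c = RInt F a b + RInt F b c.
Proof.
  symmetry. apply (@RInt_Chasles R_CompleteNormedModule); apply dominated_ex_RInt.
Qed.

Lemma RInt_mono_interval (a c d b : R) : a <= c -> c <= d -> d <= b ->
  RInt F c d <= RInt F a b.
Proof.
  intros Hac Hcd Hdb. rewrite (RInt_split a c b), (RInt_split c d b).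
  assert (0 <= RInt F a c) by (apply RInt_ge_0; [lra | apply dominated_ex_RInt | intros; apply HF]).
  assert (0 <= RInt F d b) by (apply RInt_ge_0; [lra | apply dominated_ex_RInt | intros; apply HF]).
  lra.
Qed.

Lemma is_RInt_rescaled (c d : R) : d = c + L ->
  is_RInt (fun r => F (r * L + c)) 0 1 (RInt F c d / L).
Proof.
  intros ->.
  assert (H : is_RInt F (L * 0 + c) (L * 1 + c) (RInt F c (c + L))).
  { replace (L * 0 + c) with c by ring. replace (L * 1 + c) with (c + L) by ring.
    apply (@RInt_correct R_CompleteNormedModule), dominated_ex_RInt. }
  apply is_RInt_comp_lin, (is_RInt_scal _ _ _ (/ L)) in H.
  eapply is_RInt_congr; [exact H| |].
  - intros x. change (/ L * (L * F (L * x + c)) = F (x * L + c)).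
    field_simplify; [f_equal; ring | lra].
  - change (/ L * RInt F c (c + L) = RInt F c (c + L) / L). field. lra.
Qed.

Definition partial_periodization (n : nat) (r : R) : R :=
  sum_f_R0 (fun k => F (r * L - INR k * L)) n +
  sum_f_R0 (fun k => F (r * L + (INR k + 1) * L)) n.

(* The window [-nL, (n+2)L] swept by the partial periodization as r ranges over [0,1]. *)
Definition window (n : nat) : R := RInt F (- INR n * L) ((INR n + 2) * L).

Lemma is_RInt_left_sum (n : nat) :
  is_RInt (fun r => sum_f_R0 (fun k => F (r * L - INR k * L)) n) 0 1
          (RInt F (- INR n * L) L / L).
Proof.
  induction n as [|n IH].
  - eapply is_RInt_congr; [apply (is_RInt_rescaled 0 L); ring| |].
    + intros x. simpl. f_equal; ring.
    + simpl. f_equal. f_equal. ring.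
  - assert (H := is_RInt_plus _ _ _ _ _ _ IH
                  (is_RInt_rescaled (- (INR n + 1) * L) (- INR n * L) ltac:(ring))).
    eapply is_RInt_congr; [exact H| |].
    + intros x. change (sum_f_R0 (fun k => F (x * L - INR k * L)) n + F (x * L + - (INR n + 1) * L)
                        = sum_f_R0 (fun k => F (x * L - INR k * L)) (S n)).
      rewrite tech5, S_INR. f_equal. f_equal. ring.
    + change (RInt F (- INR n * L) L / L + RInt F (- (INR n + 1) * L) (- INR n * L) / L
              = RInt F (- INR (S n) * L) L / L).
      rewrite S_INR, (RInt_split (- (INR n + 1) * L) (- INR n * L) L). field. lra.
Qed.

Lemma is_RInt_right_sum (n : nat) :
  is_RInt (fun r => sum_f_R0 (fun k => F (r * L + (INR k + 1) * L)) n) 0 1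
          (RInt F L ((INR n + 2) * L) / L).
Proof.
  induction n as [|n IH].
  - eapply is_RInt_congr; [apply (is_RInt_rescaled L (L + L)); ring| |].
    + intros x. simpl. f_equal; ring.
    + simpl. f_equal. f_equal. ring.
  - assert (H := is_RInt_plus _ _ _ _ _ _ IH
                  (is_RInt_rescaled ((INR n + 2) * L) ((INR n + 3) * L) ltac:(ring))).
    eapply is_RInt_congr; [exact H| |].
    + intros x. change (sum_f_R0 (fun k => F (x * L + (INR k + 1) * L)) n + F (x * L + (INR n + 2) * L)
                        = sum_f_R0 (fun k => F (x * L + (INR k + 1) * L)) (S n)).
      rewrite tech5, S_INR. f_equal. f_equal. ring.
    + change (RInt F L ((INR n + 2) * L) / L + RInt F ((INR n + 2) * L) ((INR n + 3) * L) / L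
              = RInt F L ((INR (S n) + 2) * L) / L).
      rewrite S_INR. replace ((INR n + 1 + 2) * L) with ((INR n + 3) * L) by ring.
      rewrite (RInt_split L ((INR n + 2) * L) ((INR n + 3) * L)). field. lra.
Qed.

Lemma is_RInt_partial_periodization (n : nat) :
  is_RInt (partial_periodization n) 0 1 (window n / L).
Proof.
  eapply is_RInt_congr; [exact (is_RInt_plus _ _ _ _ _ _ (is_RInt_left_sum n) (is_RInt_right_sum n))| |].
  - reflexivity.
  - change (RInt F (- INR n * L) L / L + RInt F L ((INR n + 2) * L) / L = window n / L).
    unfold window. rewrite (RInt_split (- INR n * L) L ((INR n + 2) * L)). field. lra.
Qed.

Lemma window_incr (n : nat) : window n <= window (S n).
Proof.
  unfold window. rewrite S_INR. pose proof (pos_INR n).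
  apply RInt_mono_interval; nra.
Qed.

Lemma periodization_tail (n : nat) (r : R) : 0 <= r <= 1 ->
  0 <= periodization F L (r * L) - partial_periodization n r <=
  2 * (C * exp (L / 2) * exp (- L / 2) ^ (S n) / (1 - exp (- L / 2))).
Proof.
  intros Hr.
  set (D := C * exp (L / 2)).
  assert (HD : C * exp (Rabs (r * L) / 2) <= D).
  { apply Rmult_le_compat_l; [apply dominated_const_nonneg|]. apply exp_le_exp.
    rewrite Rabs_pos_eq by nra. nra. }
  assert (Hleft : forall m, 0 <= F (r * L - INR m * L) <= D * exp (- L / 2) ^ m).
  { intros m. destruct (left_translate_bound (r * L) m) as [H0 H1]. split; [exact H0|].
    eapply Rle_trans; [exact H1|]. apply Rmult_le_compat_r; [apply pow_le, Rlt_le, exp_pos | exact HD]. }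
  assert (Hright : forall m, 0 <= F (r * L + (INR m + 1) * L) <= D * exp (- L / 2) ^ m).
  { intros m. destruct (right_translate_bound (r * L) m) as [H0 H1]. split; [exact H0|].
    eapply Rle_trans; [exact H1|]. apply Rmult_le_compat_r; [apply pow_le, Rlt_le, exp_pos | exact HD]. }
  pose proof (series_tail_geom _ D _ n decay_range Hleft).
  pose proof (series_tail_geom _ D _ n decay_range Hright).
  unfold periodization, partial_periodization. lra.
Qed.

Lemma partial_periodization_unif (eps : R) : 0 < eps ->
  exists N, forall n, (N <= n)%nat -> forall r, 0 <= r <= 1 ->
    Rabs (partial_periodization n r - periodization F L (r * L)) < eps.
Proof.
  intros Heps. pose proof decay_range as Hrho. set (rho := exp (- L / 2)) in *.
  set (D := C * exp (L / 2)).
  assert (HD : 0 <= D) by (pose proof dominated_const_nonneg; pose proof (exp_pos (L / 2)); unfold D; nra).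
  set (y := eps * (1 - rho) / (2 * D + 1)).
  assert (Hy : 0 < y) by (unfold y; apply Rdiv_lt_0_compat; nra).
  destruct (pow_lt_1_zero rho ltac:(rewrite Rabs_pos_eq; lra) y Hy) as [N HN].
  exists N. intros n Hn r Hr.
  assert (Hpow : rho ^ S n < y) by (rewrite <- (Rabs_pos_eq (rho ^ S n)) by (apply pow_le; lra); apply HN; lia).
  assert (Hsmall : 2 * (D * rho ^ S n / (1 - rho)) < eps).
  { assert (Hmono : D * rho ^ S n / (1 - rho) <= D * y / (1 - rho)).
    { unfold Rdiv. apply Rmult_le_compat_r; [apply Rlt_le, Rinv_0_lt_compat; lra|]. nra. }
    assert (E : 2 * (D * y / (1 - rho)) = eps - eps / (2 * D + 1)) by (unfold y; field; lra).
    assert (0 < eps / (2 * D + 1)) by (apply Rdiv_lt_0_compat; lra).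
    lra. }
  pose proof (periodization_tail n r Hr) as Htail. fold rho D in Htail.
  rewrite Rabs_minus_sym, Rabs_pos_eq; lra.
Qed.

(* Uniform convergence lets us pass to the limit under the integral over [0,1]:
   the integral of the periodization is the limit of the normalized windows. *)
Lemma periodization_RInt_limit : exists J : R,
  is_lim_seq (fun n => window n / L) J /\ is_RInt (fun r => periodization F L (r * L)) 0 1 J.
Proof.
  set (fn := fun (n : nat) r => partial_periodization n (clamp01 r)).
  set (lim_fn := fun r => periodization F L (clamp01 r * L)).
  assert (Hint : forall n, is_RInt (fn n) 0 1 (window n / L)).
  { intros n. eapply is_RInt_ext; [|apply is_RInt_partial_periodization].
    intros x Hx. rewrite Rmin_left, Rmax_right in Hx by lra.
    unfold fn. rewrite clamp01_id by lra. reflexivity. }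
  assert (Hunif : filterlim fn eventually (@locally (fct_UniformSpace R R_UniformSpace) lim_fn)).
  { apply filterlim_locally. intros eps.
    destruct (partial_periodization_unif eps (cond_pos eps)) as [N HN].
    exists N. intros n Hn t.
    apply HN; [exact Hn | apply clamp01_range]. }
  destruct (filterlim_RInt fn 0 1 eventually eventually_filter lim_fn _ Hint Hunif)
    as [J [HJ Hlim]].
  exists J. split; [exact HJ|].
  eapply is_RInt_ext; [|exact Hlim]. intros x Hx. rewrite Rmin_left, Rmax_right in Hx by lra.
  unfold lim_fn. rewrite clamp01_id by lra. reflexivity.
Qed.

(* The windows exhaust R, so their limit is the improper integral of F >= 0. *)
Lemma windows_is_RInt_gen (S : R) : is_lim_seq window S ->
  is_RInt_gen F (Rbar_locally m_infty) (Rbar_locally p_infty) S.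
Proof.
  intros HS.
  assert (Hle : forall n, window n <= S) by (apply is_lim_seq_incr_compare; [exact HS | exact window_incr]).
  intros P [eps HP].
  destruct (proj1 (filterlim_locally _ _) HS eps) as [N HN].
  specialize (HN N (le_n N)). change (Rabs (window N - S) < eps) in HN.
  pose proof (pos_INR N).
  apply (Filter_prod _ _ _ (fun a => a < - INR N * L) (fun b => (INR N + 2) * L < b));
    [exists (- INR N * L); auto | exists ((INR N + 2) * L); auto |].
  intros a b Ha Hb. exists (RInt F a b). split.
  { apply (@RInt_correct R_CompleteNormedModule), dominated_ex_RInt. }
  apply HP. change (Rabs (RInt F a b - S) < eps).
  assert (Hlow : window N <= RInt F a b) by (apply RInt_mono_interval; nra).
  destruct (INR_unbounded ((Rabs a + Rabs b) / L)) as [M HM].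
  assert (HML : Rabs a + Rabs b < INR M * L).
  { apply (Rmult_lt_compat_r L) in HM; [|exact HL]. unfold Rdiv in HM.
    rewrite Rmult_assoc, Rinv_l, Rmult_1_r in HM by lra. exact HM. }
  assert (Hup : RInt F a b <= window M).
  { pose proof (Rle_abs a). pose proof (Rle_abs b). pose proof (Rabs_pos a).
    pose proof (Rabs_pos b). pose proof (Rabs_maj2 a).
    apply RInt_mono_interval; nra. }
  specialize (Hle M). apply Rabs_def2 in HN. apply Rabs_def1; lra.
Qed.

Theorem periodization_integral :
  ex_RInt (fun r => periodization F L (r * L)) 0 1 /\
  ex_RInt_gen F (Rbar_locally m_infty) (Rbar_locally p_infty) /\
  RInt (fun r => periodization F L (r * L)) 0 1 =
    RInt_gen F (Rbar_locally m_infty) (Rbar_locally p_infty) / L.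
Proof.
  destruct periodization_RInt_limit as [J [HJ HTS]].
  assert (HW : is_lim_seq window (L * J)).
  { apply (is_lim_seq_ext (fun n => L * (window n / L))); [intros n; field; lra|].
    exact (is_lim_seq_scal_l _ L J HJ). }
  pose proof (windows_is_RInt_gen _ HW) as Hgen.
  split; [exists J; exact HTS|]. split; [exists (L * J); exact Hgen|].
  rewrite (is_RInt_unique _ _ _ _ HTS), (is_RInt_gen_unique _ _ Hgen).
  assert (E : J = L * J / L) by (field; lra). exact E.
Qed.

End Periodization.

(* psi_lambda(k) = ll_cell q (ln lambda - k ln q): the q-LL law in logarithmic coordinates. *)
Definition ll_cell (q t : R) : R := exp (- exp t) - exp (- (q * exp t)).

Lemma ll_cell_bounds (q t : R) : 1 < q ->
  0 < ll_cell q t /\ ll_cell q t < 1 /\ ll_cell q t <= exp (- exp t) /\ ll_cell q t <= q * exp t.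
Proof.
  intros Hq. unfold ll_cell. pose proof (exp_pos t) as Ha. set (a := exp t) in *.
  assert (exp (- (q * a)) < exp (- a)) by (apply exp_increasing; nra).
  assert (exp (- a) < 1) by (rewrite <- exp_0; apply exp_increasing; lra).
  pose proof (exp_pos (- (q * a))). pose proof (exp_ineq1_le (- (q * a))).
  repeat split; lra.
Qed.

(* A cell is exponentially small on the right and linearly small (in exp t) on the left. *)
Lemma ln_ll_cell_le (q t : R) : 1 < q -> ln (ll_cell q t) <= ln q - Rabs t.
Proof.
  intros Hq. destruct (ll_cell_bounds q t Hq) as [Hg0 [_ [Hright Hleft]]].
  pose proof (ln_gt_0 q Hq). destruct (Rle_or_lt t 0) as [ht|ht].
  - rewrite Rabs_left1 by exact ht.
    assert (ln (ll_cell q t) <= ln (q * exp t)) by (apply ln_le; auto).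
    rewrite ln_mult, ln_exp in H0 by (lra || apply exp_pos). lra.
  - rewrite Rabs_right by lra.
    assert (ln (ll_cell q t) <= - exp t) by (rewrite <- (ln_exp (- exp t)); apply ln_le; auto).
    pose proof (exp_ineq1_le t). lra.
Qed.

(* The bound -s e^s <= 2 e^(s/2) controls -g ln g by a power of g. *)
Lemma neg_mul_exp_le (s : R) : - s * exp s <= 2 * exp (s / 2).
Proof.
  assert (Hs : exp s = exp (s / 2) * exp (s / 2)) by (rewrite <- exp_plus; f_equal; field).
  assert (Hinv : exp (- s / 2) * exp (s / 2) = 1) by (apply exp_opp_cancel; field).
  pose proof (exp_ineq1_le (- s / 2)). pose proof (exp_pos (s / 2)).
  assert (- s / 2 * exp (s / 2) <= exp (- s / 2) * exp (s / 2)) by nra.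
  rewrite Hs. nra.
Qed.

Lemma phi_integrand_dominated (q : R) : 1 < q ->
  exp_dominated (phi_integrand q) (2 * exp (ln q / 2) / ln 2).
Proof.
  intros Hq. pose proof (ln_gt_0 2 ltac:(lra)) as Hl2. split.
  - intros t. apply (@ex_derive_continuous R_AbsRing R_NormedModule).
    destruct (ll_cell_bounds q t Hq) as [Hg _]. unfold ll_cell in Hg.
    unfold phi_integrand, log2. auto_derive. repeat split; auto; lra.
  - intros t. destruct (ll_cell_bounds q t Hq) as [Hg0 [Hg1 _]].
    pose proof (ln_ll_cell_le q t Hq) as Hln.
    change (phi_integrand q t) with (- (ll_cell q t * (ln (ll_cell q t) / ln 2))).
    set (s := ln (ll_cell q t)) in *.
    assert (Hs : s < 0) by (unfold s; rewrite <- ln_1; apply ln_increasing; lra).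
    replace (- (ll_cell q t * (s / ln 2))) with ((- s * exp s) / ln 2)
      by (unfold s; rewrite exp_ln by exact Hg0; field; lra).
    split.
    + apply Rdiv_le_0_compat; [pose proof (exp_pos s); nra | exact Hl2].
    + assert (exp (s / 2) <= exp (ln q / 2) * exp (- Rabs t / 2))
        by (rewrite <- exp_plus; apply exp_le_exp; lra).
      pose proof (neg_mul_exp_le s).
      replace (2 * exp (ln q / 2) / ln 2 * exp (- Rabs t / 2)) with
        ((2 * (exp (ln q / 2) * exp (- Rabs t / 2))) / ln 2) by (field; lra).
      apply Rmult_le_compat_r; [apply Rlt_le, Rinv_0_lt_compat; exact Hl2 | lra].
Qed.

(* Algebraic core of the Fisher bound, with a = exp t and W = exp (-(q-1) exp t). *)
Lemma fisher_ratio_bound (q a W : R) : 1 < q -> 0 < a -> 0 < W < 1 -> W * (1 + (q - 1) * a) <= 1 ->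
  a ^ 2 * (1 - q * W) ^ 2 <= 2 * q ^ 2 * (a + a ^ 2) * (1 - W).
Proof.
  intros Hq Ha HW H.
  set (x := 1 - W). set (y := (q - 1) * W).
  assert (Hx : 0 < x <= 1) by (unfold x; lra).
  assert (Hy : 0 <= y) by (unfold y; nra).
  assert (Hxy : y * a <= x) by (unfold x, y; nra).
  assert (Hyq : y <= q * q) by (unfold y; nra).
  assert (Hqq : 1 <= q * q) by nra.
  assert (Haa : 0 < a * a) by nra.
  replace (1 - q * W) with (x - y) by (unfold x, y; ring).
  assert (Hsq : (x - y) * (x - y) <= 2 * (x * x) + 2 * (y * y)) by nra.
  assert (Hxx : a * a * (x * x) <= q * q * (a * a) * x).
  { assert (x * x <= x) by nra. assert (a * a * (x * x) <= a * a * x) by nra.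
    assert (0 <= a * a * x) by nra. nra. }
  assert (Hyy : a * a * (y * y) <= q * q * a * x).
  { assert (a * a * (y * y) <= a * a * y * (q * q)) by (assert (0 <= a * a * y) by nra; nra).
    assert (a * a * y <= a * x) by nra. assert (0 <= q * q) by nra. nra. }
  assert (a * a * ((x - y) * (x - y)) <= a * a * (2 * (x * x) + 2 * (y * y))) by nra.
  replace (a ^ 2 * (x - y) ^ 2) with (a * a * ((x - y) * (x - y))) by ring.
  replace (2 * q ^ 2 * (a + a ^ 2) * x) with (2 * (q * q * (a * a) * x) + 2 * (q * q * a * x)) by ring.
  lra.
Qed.

Lemma rho_integrand_le (q t : R) : 1 < q ->
  rho_integrand q t <= 2 * q ^ 2 * (exp (- exp t) * (exp t + exp t ^ 2)).
Proof.
  intros Hq. pose proof (exp_pos t) as Ha. set (a := exp t) in *.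
  set (E := exp (- a)). set (W := exp (- ((q - 1) * a))).
  assert (HE : 0 < E) by apply exp_pos.
  assert (HEW : exp (- (q * a)) = E * W) by (unfold E, W; rewrite <- exp_plus; f_equal; ring).
  assert (HW0 : 0 < W) by apply exp_pos.
  assert (HW1 : W < 1).
  { rewrite <- exp_0. unfold W. apply exp_increasing.
    assert (0 < (q - 1) * a) by (apply Rmult_lt_0_compat; lra). lra. }
  assert (HW2 : W * (1 + (q - 1) * a) <= 1).
  { assert (W * exp ((q - 1) * a) = 1) by (unfold W; apply exp_opp_cancel; ring).
    pose proof (exp_ineq1_le ((q - 1) * a)). nra. }
  pose proof (fisher_ratio_bound q a W Hq Ha (conj HW0 HW1) HW2).
  unfold rho_integrand. fold a E. rewrite HEW.
  replace ((- (a * E) + q * a * (E * W)) ^ 2) with (E * E * (a ^ 2 * (1 - q * W) ^ 2)) by ring.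
  replace (E - E * W) with (E * (1 - W)) by ring.
  apply (Rmult_le_reg_r (E * (1 - W))); [nra|].
  unfold Rdiv. rewrite Rmult_assoc, Rinv_l, Rmult_1_r by nra.
  assert (0 <= E * E) by nra. nra.
Qed.

Lemma cube_le_exp (a : R) : 0 <= a -> (1 + a / 3) ^ 3 <= exp a.
Proof.
  intros Ha.
  assert (Hexp : exp a = exp (a / 3) * exp (a / 3) * exp (a / 3))
    by (rewrite <- !exp_plus; f_equal; field).
  pose proof (exp_ineq1_le (a / 3)).
  assert ((1 + a / 3) * (1 + a / 3) <= exp (a / 3) * exp (a / 3)) by nra.
  rewrite Hexp. simpl. nra.
Qed.

Lemma exp_neg_exp_poly_bound (t : R) :
  exp (- exp t) * (exp t + exp t ^ 2) <= 27 * exp (- Rabs t / 2).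
Proof.
  pose proof (exp_pos t) as Ha. set (a := exp t) in *. set (E := exp (- a)).
  assert (HE : 0 < E) by apply exp_pos.
  destruct (Rle_or_lt t 0) as [ht|ht].
  - rewrite Rabs_left1 by exact ht.
    assert (a <= 1) by (unfold a; rewrite <- exp_0; apply exp_le_exp; exact ht).
    assert (E <= 1) by (unfold E; rewrite <- exp_0; apply exp_le_exp; lra).
    assert (a <= exp (- - t / 2)) by (unfold a; apply exp_le_exp; lra).
    nra.
  - rewrite Rabs_right by lra.
    assert (Ha1 : 1 <= a) by (unfold a; rewrite <- exp_0; apply exp_le_exp; lra).
    pose proof (cube_le_exp a ltac:(lra)).
    assert (HEa : E * exp a = 1) by (unfold E; apply exp_opp_cancel; ring).
    assert (H27 : a * (E * (a + a ^ 2)) <= 27).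
    { assert (a ^ 2 + a ^ 3 <= 27 * exp a) by nra.
      replace (a * (E * (a + a ^ 2))) with (E * (a ^ 2 + a ^ 3)) by ring.
      assert (E * (a ^ 2 + a ^ 3) <= E * (27 * exp a)) by nra. nra. }
    assert (Hinv : exp (- t) * a = 1) by (unfold a; apply exp_opp_cancel; ring).
    assert (exp (- t) <= exp (- t / 2)) by (apply exp_le_exp; lra).
    pose proof (exp_pos (- t)).
    replace (E * (a + a ^ 2)) with (exp (- t) * (a * (E * (a + a ^ 2))))
      by (rewrite <- (Rmult_assoc (exp (- t)) a), Hinv; ring).
    nra.
Qed.

Lemma rho_integrand_dominated (q : R) : 1 < q -> exp_dominated (rho_integrand q) (54 * q ^ 2).
Proof.
  intros Hq. split.
  - intros t. apply (@ex_derive_continuous R_AbsRing R_NormedModule).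
    destruct (ll_cell_bounds q t Hq) as [Hg _]. unfold ll_cell in Hg.
    unfold rho_integrand. auto_derive. lra.
  - intros t. destruct (ll_cell_bounds q t Hq) as [Hg0 _]. split.
    + unfold rho_integrand. apply Rdiv_le_0_compat; [apply pow2_ge_0 | exact Hg0].
    + pose proof (rho_integrand_le q t Hq). pose proof (exp_neg_exp_poly_bound t).
      assert (0 <= q ^ 2) by nra. nra.
Qed.

Lemma RInt_periodized (G F : R -> R) (C L : R) : 0 < L -> exp_dominated F C ->
  (forall r, G r = periodization F L (r * L)) ->
  ex_RInt G 0 1 /\ ex_RInt_gen F (Rbar_locally m_infty) (Rbar_locally p_infty) /\
  RInt G 0 1 = RInt_gen F (Rbar_locally m_infty) (Rbar_locally p_infty) / L.
Proof.
  intros HL HF HG. destruct (periodization_integral F C L HL HF) as [Hex [Hgen Heq]].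
  split; [|split; [exact Hgen|]].
  - eapply ex_RInt_ext; [|exact Hex]. intros x _. symmetry. apply HG.
  - rewrite <- Heq. apply RInt_ext. intros x _. apply HG.
Qed.

Lemma SeriesZ_periodization (T : Z -> R) (c : R) (F : R -> R) (L x : R) :
  (forall k, T k = c * F (x - IZR k * L)) -> SeriesZ T = c * periodization F L x.
Proof.
  intros H. unfold SeriesZ, periodization. rewrite Rmult_plus_distr_l, <- !Series_scal_l.
  f_equal; apply Series_ext; intros n; rewrite H; do 2 f_equal.
  - rewrite <- INR_IZR_INZ. reflexivity.
  - rewrite opp_IZR, plus_IZR, <- INR_IZR_INZ. simpl IZR. ring.
Qed.

Lemma ex_seriesZ_periodization (T : Z -> R) (c : R) (F : R -> R) (C L x : R) :
  0 < L -> exp_dominated F C ->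
  (forall k, T k = c * F (x - IZR k * L)) -> ex_seriesZ T.
Proof.
  intros HL HF H. split.
  - apply (ex_series_ext (fun n => scal c (F (x - INR n * L)))).
    + intros n. rewrite H, <- INR_IZR_INZ. reflexivity.
    + apply (@ex_series_scal_l R_AbsRing R_NormedModule), (ex_series_left F C); auto.
  - apply (ex_series_ext (fun n => scal c (F (x + (INR n + 1) * L)))).
    + intros n. rewrite H. change (c * F (x + (INR n + 1) * L) =
        c * F (x - IZR (- (Z.of_nat n + 1)) * L)). do 2 f_equal.
      rewrite opp_IZR, plus_IZR, <- INR_IZR_INZ. simpl IZR. ring.
    + apply (@ex_series_scal_l R_AbsRing R_NormedModule), (ex_series_right F C); auto.
Qed.

Lemma div_powerRZ (q l : R) (z : Z) : 1 < q -> 0 < l ->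
  l / powerRZ q z = exp (ln l - IZR z * ln q).
Proof.
  intros Hq Hl. rewrite powerRZ_Rpower by lra. unfold Rpower, Rminus.
  rewrite exp_plus, exp_ln, exp_Ropp by exact Hl. reflexivity.
Qed.

Lemma qLL_ll_cell (q l : R) (k : Z) : 1 < q -> 0 < l ->
  qLL q l k = ll_cell q (ln l - IZR k * ln q).
Proof.
  intros Hq Hl. unfold qLL, ll_cell, Rdiv.
  rewrite !Ropp_mult_distr_l_reverse. fold (l / powerRZ q k) (l / powerRZ q (k - 1)).
  rewrite !div_powerRZ, minus_IZR by auto.
  replace (ln l - (IZR k - 1) * ln q) with ((ln l - IZR k * ln q) + ln q) by ring.
  rewrite exp_plus, exp_ln by lra. f_equal. f_equal. ring.
Qed.

Lemma Derive_qLL (q l : R) (k : Z) : 1 < q -> 0 < l ->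
  Derive (fun m => qLL q m k) l =
  / l * (- (exp (ln l - IZR k * ln q) * exp (- exp (ln l - IZR k * ln q))) +
         q * exp (ln l - IZR k * ln q) * exp (- (q * exp (ln l - IZR k * ln q)))).
Proof.
  intros Hq Hl.
  assert (HP1 : 0 < powerRZ q k) by (apply powerRZ_lt; lra).
  assert (HP2 : 0 < powerRZ q (k - 1)) by (apply powerRZ_lt; lra).
  set (t := ln l - IZR k * ln q).
  assert (E1 : exp t = l / powerRZ q k) by (unfold t; rewrite div_powerRZ; auto).
  assert (E2 : q * exp t = l / powerRZ q (k - 1)).
  { rewrite div_powerRZ, minus_IZR by auto. unfold t.
    replace (ln l - (IZR k - 1) * ln q) with ((ln l - IZR k * ln q) + ln q) by ring.
    rewrite exp_plus, exp_ln by lra. ring. }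
  unfold qLL. set (P1 := powerRZ q k) in *. set (P2 := powerRZ q (k - 1)) in *.
  apply is_derive_unique. auto_derive; auto; try lra.
  rewrite E2, E1. unfold Rdiv.
  replace (- (l * / P1)) with (- l * / P1) by ring.
  replace (- (l * / P2)) with (- l * / P2) by ring.
  field. repeat split; lra.
Qed.

Lemma entropy_qLL (q l : R) : 1 < q -> 0 < l ->
  entropy (qLL q) l = periodization (phi_integrand q) (ln q) (ln l).
Proof.
  intros Hq Hl. rewrite <- (Rmult_1_l (periodization _ _ _)).
  apply SeriesZ_periodization. intros k. unfold entropy_term.
  rewrite qLL_ll_cell by auto. unfold phi_integrand, ll_cell. ring.
Qed.

Lemma fisher_term_qLL (q l : R) (k : Z) : 1 < q -> 0 < l ->
  fisher_term (qLL q) l k = / l ^ 2 * rho_integrand q (ln l - IZR k * ln q).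
Proof.
  intros Hq Hl. unfold fisher_term. rewrite Derive_qLL, qLL_ll_cell by auto.
  destruct (ll_cell_bounds q (ln l - IZR k * ln q) Hq) as [Hg _].
  unfold rho_integrand. unfold ll_cell in *. field. split; lra.
Qed.

Lemma fisher_qLL (q l : R) : 1 < q -> 0 < l ->
  fisher (qLL q) l = / l ^ 2 * periodization (rho_integrand q) (ln q) (ln l).
Proof.
  intros Hq Hl. apply SeriesZ_periodization. intros k. apply fisher_term_qLL; auto.
Qed.

Lemma qLL_series_converge (q l : R) : 1 < q -> 0 < l ->
  ex_seriesZ (entropy_term (qLL q) l) /\ ex_seriesZ (fisher_term (qLL q) l).
Proof.
  intros Hq Hl. pose proof (ln_gt_0 q Hq) as HL. split.
  - apply (ex_seriesZ_periodization _ 1 _ _ (ln q) (ln l) HL (phi_integrand_dominated q Hq)).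
    intros k. unfold entropy_term. rewrite qLL_ll_cell by auto.
    unfold phi_integrand, ll_cell. ring.
  - apply (ex_seriesZ_periodization _ (/ l ^ 2) _ _ (ln q) (ln l) HL (rho_integrand_dominated q Hq)).
    intros k. apply fisher_term_qLL; auto.
Qed.

(* Scaling lambda by q shifts ln lambda by exactly one period ln q. *)
Lemma qLL_weakly_scale_invariant (q : R) : 1 < q -> weakly_scale_invariant (qLL q) q.
Proof.
  intros Hq l Hl. pose proof (ln_gt_0 q Hq) as HL.
  assert (Hql : 0 < q * l) by nra.
  assert (Hln : ln (q * l) = ln l + ln q) by (rewrite ln_mult by lra; ring).
  rewrite !entropy_qLL, !fisher_qLL, Hln by auto. split.
  - rewrite (periodization_shift _ _ _ HL (phi_integrand_dominated q Hq)). reflexivity.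
  - rewrite (periodization_shift _ _ _ HL (rho_integrand_dominated q Hq)). field. lra.
Qed.

Lemma entropy_Rpower (q r : R) : 1 < q ->
  entropy (qLL q) (Rpower q r) = periodization (phi_integrand q) (ln q) (r * ln q).
Proof. intros Hq. rewrite entropy_qLL, ln_Rpower by (auto; apply exp_pos). reflexivity. Qed.

(* The weight q^(2r) exactly cancels the factor 1/lambda^2 of the Fisher information. *)
Lemma fisher_Rpower (q r : R) : 1 < q ->
  Rpower q (2 * r) * fisher (qLL q) (Rpower q r) =
  periodization (rho_integrand q) (ln q) (r * ln q).
Proof.
  intros Hq. rewrite fisher_qLL, ln_Rpower by (auto; apply exp_pos).
  assert (Hsq : Rpower q (2 * r) = Rpower q r ^ 2)
    by (unfold Rpower; simpl; rewrite Rmult_1_r, <- exp_plus; f_equal; ring).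
  rewrite Hsq. pose proof (exp_pos (r * ln q)). unfold Rpower. field. lra.
Qed.

Theorem mainTheorem4 (q : R) (hq : 1 < q) :
  (* the entropy and Fisher-information series converge *)
  (forall l, 0 < l ->
     ex_seriesZ (entropy_term (qLL q) l) /\ ex_seriesZ (fisher_term (qLL q) l)) /\
  weakly_scale_invariant (qLL q) q /\
  (* the defining integrals exist *)
  ex_RInt (fun r => entropy (qLL q) (Rpower q r)) 0 1 /\
  ex_RInt (fun r => Rpower q (2 * r) * fisher (qLL q) (Rpower q r)) 0 1 /\
  ex_RInt_gen (phi_integrand q) (Rbar_locally m_infty) (Rbar_locally p_infty) /\
  ex_RInt_gen (rho_integrand q) (Rbar_locally m_infty) (Rbar_locally p_infty) /\
  calH (qLL q) q = phi q / ln q /\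
  calI (qLL q) q = rho q / ln q.
Proof.
  pose proof (ln_gt_0 q hq) as HL.
  pose proof (phi_integrand_dominated q hq) as Hphi.
  pose proof (rho_integrand_dominated q hq) as Hrho.
  destruct (RInt_periodized _ _ _ _ HL Hphi (fun r => entropy_Rpower q r hq)) as [HexH [HgenH HcalH]].
  destruct (RInt_periodized _ _ _ _ HL Hrho (fun r => fisher_Rpower q r hq)) as [HexI [HgenI HcalI]].
  split; [intros l Hl; apply qLL_series_converge; auto|].
  split; [apply qLL_weakly_scale_invariant; auto|].
  split; [exact HexH|]. split; [exact HexI|].
  split; [exact HgenH|]. split; [exact HgenI|].
  split; [exact HcalH | exact HcalI].
Qed.
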